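(* In the E-phase model, for every formula $A$: (1) for every formula $D$ and every $n\ge 0$ and $T_1,\dots,T_n$ each a closed term or an atom, if $c^D T_1\cdots T_n\in[\![A]\!]$ then $c^D T_1\cdots T_n\in A^*$; and (2) $A^*\subseteq[\![A]\!]$.
   Context: System $\mathbf{IL}_{\mathbf{at}}$: formulas $A ::= X\mid A\to B\mid\forall X.A$ ($X$ atoms); terms $t ::= x\mid c^A\mid\lambda x.t\mid ts\mid\Lambda X.t\mid tX$ (a term-constant $c^A$ for each formula $A$; $tX$ only with $X$ an atom). $\Gamma\vdash t:A$ derivable by: $\Gamma,x:A\vdash x:A$; $\Gamma\vdash c^A:A$; $\to$-introduction and elimination (abstraction, application); $\forall$-introduction $\Gamma\vdash\Lambda X.t:\forall X.A$ from $\Gamma\vdash t:A$ if $X$ is not free in the formulas of $\Gamma$; $\forall$-elimination $\Gamma\vdash tY:A[X:=Y]$ from $\Gamma\vdash t:\forall X.A$ for atoms $Y$. $\beta$-reduction $(\lambda x.t)s\to_\beta t[x:=s]$, $(\Lambda X.t)Y\to_\beta t[X:=Y]$ in any subterm position; normal = no redex; $\twoheadrightarrow$ reflexive-transitive closure. Closed term = no free term-variables. $[\![A]\!]$ = set of closed terms $t$ with $t\twoheadrightarrow s$ for some normal $s$ such that $\vdash s:A$ is derivable. E-phase model: interpretation of formulas as sets of closed terms: $X^*=[\![X]\!]$; $(A\to B)^*=\{t\text{ closed}\mid ts\in B^*\text{ for every }s\in A^*\}$; $(\forall X.A)^*=\{t\text{ closed}\mid tY\in(A[X:=Y])^*\text{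 for every atom }Y\}$. *)

(* System IL_at with de Bruijn indices for both atom binders
   (forall X.A, Lambda X.t) and term-variable binders (lambda x.t).
   Free atoms are the de Bruijn indices that are not bound; at top level
   every natural number n denotes an atom. *)
From Stdlib Require Import Arith List.
Import ListNotations.

Inductive form : Type :=
| Atom : nat -> form
| Imp  : form -> form -> form
| All  : form -> form.          (* forall X. A ; X is index 0 in the body *)

Definition ashift (c n : nat) : nat := if Nat.ltb n c then n else S n.

(* substituting the atom Y (given at the level outside the binder) for the
   bound index c, decrementing the indices above c *)
Definition asubst (c Y n : nat) : nat :=
  if Nat.eqb n c then Y + c else if Nat.ltb n c then n else pred n.

Fixpoint fshift (c : nat) (A : form) : form :=
  match A with
  | Atom n => Atom (ashift c n)
  | Imp A B => Imp (fshift c A) (fshift c B)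
  | All A => All (fshift (S c) A)
  end.

Fixpoint fsubst (c Y : nat) (A : form) : form :=
  match A with
  | Atom n => Atom (asubst c Y n)
  | Imp A B => Imp (fsubst c Y A) (fsubst c Y B)
  | All A => All (fsubst (S c) Y A)
  end.

(* A[X:=Y] where forall X. A is represented as All A *)
Definition finst (A : form) (Y : nat) : form := fsubst 0 Y A.

Fixpoint fsize (A : form) : nat :=
  match A with
  | Atom _ => 1
  | Imp A B => S (fsize A + fsize B)
  | All A => S (fsize A)
  end.

Inductive term : Type :=
| Var   : nat -> term
| Const : form -> term
| Lam   : term -> term           (* lambda x. t  (Curry style) *)
| App   : term -> term -> term
| TLam  : term -> term
| TApp  : term -> nat -> term.

Fixpoint vshift (c : nat) (t : term) : term :=
  match t with
  | Var i => Var (if Nat.ltb i c then i else S i)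
  | Const A => Const A
  | Lam t => Lam (vshift (S c) t)
  | App t s => App (vshift c t) (vshift c s)
  | TLam t => TLam (vshift c t)
  | TApp t Y => TApp (vshift c t) Y
  end.

Fixpoint tshift (c : nat) (t : term) : term :=
  match t with
  | Var i => Var i
  | Const A => Const (fshift c A)
  | Lam t => Lam (tshift c t)
  | App t s => App (tshift c t) (tshift c s)
  | TLam t => TLam (tshift (S c) t)
  | TApp t Y => TApp (tshift c t) (ashift c Y)
  end.

Fixpoint vsubst (c : nat) (s : term) (t : term) : term :=
  match t with
  | Var i => if Nat.eqb i c then s else if Nat.ltb i c then Var i else Var (pred i)
  | Const A => Const A
  | Lam t => Lam (vsubst (S c) (vshift 0 s) t)
  | App t1 t2 => App (vsubst c s t1) (vsubst c s t2)
  | TLam t => TLam (vsubst c (tshift 0 s) t)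
  | TApp t Y => TApp (vsubst c s t) Y
  end.

Fixpoint tsubst (c Y : nat) (t : term) : term :=
  match t with
  | Var i => Var i
  | Const A => Const (fsubst c Y A)
  | Lam t => Lam (tsubst c Y t)
  | App t1 t2 => App (tsubst c Y t1) (tsubst c Y t2)
  | TLam t => TLam (tsubst (S c) Y t)
  | TApp t Z => TApp (tsubst c Y t) (asubst c Y Z)
  end.

Inductive typed : list form -> term -> form -> Prop :=
| ty_var : forall G i A, nth_error G i = Some A -> typed G (Var i) A
| ty_const : forall G A, typed G (Const A) A
| ty_lam : forall G t A B, typed (A :: G) t B -> typed G (Lam t) (Imp A B)
| ty_app : forall G t s A B,
    typed G t (Imp A B) -> typed G s A -> typed G (App t s) B
| ty_tlam : forall G t A,
    (* the new atom (index 0) is not free in the shifted context *)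
    typed (map (fshift 0) G) t A -> typed G (TLam t) (All A)
| ty_tapp : forall G t A Y, typed G t (All A) -> typed G (TApp t Y) (finst A Y).

Inductive step : term -> term -> Prop :=
| st_beta : forall t s, step (App (Lam t) s) (vsubst 0 s t)
| st_tbeta : forall t Y, step (TApp (TLam t) Y) (tsubst 0 Y t)
| st_lam : forall t t', step t t' -> step (Lam t) (Lam t')
| st_appl : forall t t' s, step t t' -> step (App t s) (App t' s)
| st_appr : forall t s s', step s s' -> step (App t s) (App t s')
| st_tlam : forall t t', step t t' -> step (TLam t) (TLam t')
| st_tapp : forall t t' Y, step t t' -> step (TApp t Y) (TApp t' Y).

Inductive steps : term -> term -> Prop :=
| steps_refl : forall t, steps t t
| steps_step : forall t u v, step t u -> steps u v -> steps t v.

Fixpoint normal (t : term) : Prop :=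
  match t with
  | Var _ | Const _ => True
  | Lam t => normal t
  | App t s =>
      match t with Lam _ => False | _ => normal t /\ normal s end
  | TLam t => normal t
  | TApp t _ =>
      match t with TLam _ => False | _ => normal t end
  end.

(* no free term variables (atoms may occur free) *)
Fixpoint closed_at (k : nat) (t : term) : Prop :=
  match t with
  | Var i => i < k
  | Const _ => True
  | Lam t => closed_at (S k) t
  | App t s => closed_at k t /\ closed_at k s
  | TLam t => closed_at k t
  | TApp t _ => closed_at k t
  end.
Definition closed (t : term) : Prop := closed_at 0 t.

Definition sem (A : form) (t : term) : Prop :=
  closed t /\ exists s, steps t s /\ normal s /\ typed nil s A.

(* E-phase model A^*, by recursion on a fuel bounded by the size of A
   (A[X:=Y] has the same size as A) *)
Fixpoint star_n (n : nat) (A : form) (t : term) : Prop :=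
  match n with
  | 0 => False
  | S n =>
      match A with
      | Atom X => sem (Atom X) t
      | Imp A B => closed t /\ (forall s, star_n n A s -> star_n n B (App t s))
      | All A => closed t /\ (forall Y : nat, star_n n (finst A Y) (TApp t Y))
      end
  end.
Definition star (A : form) (t : term) : Prop := star_n (fsize A) A t.

(* c^D T_1 ... T_n, each T_i a term (inl) or an atom (inr) *)
Definition apps (h : term) (Ts : list (term + nat)) : term :=
  fold_left (fun h T => match T with inl s => App h s | inr Y => TApp h Y end) Ts h.

Definition arg_ok (T : term + nat) : Prop :=
  match T with inl s => closed s | inr _ => True end.

(* Claims (1) and (2) are the reflection and reification of normalization by
   evaluation, proved together by induction on the size of A (instantiating a
   bound atom preserves size).  Reflection pushes each argument through the head
   constant: if c^D T1 ... Tn reduces to a normal u, then applying it to s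
   reduces to u s', which stays normal because its head is a constant.
   Reification of A -> B applies t to c^A, which lies in A^* by reflection, and
   reads a normal form of t off the normal form of t c^A, since the constant
   cannot take part in a redex; for forall X.A it applies t to an atom N fresh
   for t and A and renames N back into the bound atom. *)

From Stdlib Require Import List Arith Lia.
Import ListNotations.

Ltac nat_cases :=
  repeat (simpl in *; match goal with
    | |- context [Nat.eqb ?a ?b] => destruct (Nat.eqb_spec a b)
    | |- context [Nat.ltb ?a ?b] => destruct (Nat.ltb_spec a b)
    | H : context [Nat.eqb ?a ?b] |- _ => destruct (Nat.eqb_spec a b)
    | H : context [Nat.ltb ?a ?b] |- _ => destruct (Nat.ltb_spec a b)
    end);
  simpl in *; try (f_equal; lia); try lia; try congruence.

(** * Renaming atoms *)

Definition rlift (r : nat -> nat) (n : nat) : nat :=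
  match n with 0 => 0 | S m => S (r m) end.

Fixpoint frename (r : nat -> nat) (A : form) : form :=
  match A with
  | Atom n => Atom (r n)
  | Imp A B => Imp (frename r A) (frename r B)
  | All A => All (frename (rlift r) A)
  end.

Fixpoint trename (r : nat -> nat) (t : term) : term :=
  match t with
  | Var i => Var i
  | Const A => Const (frename r A)
  | Lam t => Lam (trename r t)
  | App t s => App (trename r t) (trename r s)
  | TLam t => TLam (trename (rlift r) t)
  | TApp t Y => TApp (trename r t) (r Y)
  end.

Fixpoint rlift_n (c : nat) (r : nat -> nat) : nat -> nat :=
  match c with 0 => r | S c => rlift (rlift_n c r) end.

Lemma frename_ext A : forall r q, (forall n, r n = q n) -> frename r A = frename q A.
Proof.
  induction A; intros r q H; simpl; f_equal; auto.
  apply IHA; intros [|n]; simpl; auto.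
Qed.

Lemma trename_ext t : forall r q, (forall n, r n = q n) -> trename r t = trename q t.
Proof.
  induction t; intros r q H; simpl; f_equal; auto using frename_ext.
  apply IHt; intros [|n]; simpl; auto.
Qed.

Lemma frename_comp A : forall r q,
  frename r (frename q A) = frename (fun n => r (q n)) A.
Proof.
  induction A; intros r q; simpl; f_equal; auto.
  rewrite IHA; apply frename_ext; intros [|n]; reflexivity.
Qed.

Lemma trename_comp t : forall r q,
  trename r (trename q t) = trename (fun n => r (q n)) t.
Proof.
  induction t; intros r q; simpl; f_equal; auto using frename_comp.
  rewrite IHt; apply trename_ext; intros [|n]; reflexivity.
Qed.

Lemma frename_id A : frename (fun n => n) A = A.
Proof.
  induction A; simpl; f_equal; auto.
  rewrite <- IHA at 2; apply frename_ext; intros [|n]; reflexivity.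
Qed.

Lemma trename_id t : trename (fun n => n) t = t.
Proof.
  induction t; simpl; f_equal; auto using frename_id.
  rewrite <- IHt at 2; apply trename_ext; intros [|n]; reflexivity.
Qed.

Lemma ashift_rlift_n c n : ashift c n = rlift_n c S n.
Proof.
  revert n; induction c; intros [|n]; unfold ashift in *; simpl; try reflexivity.
  rewrite <- IHc; nat_cases.
Qed.

Lemma asubst_rlift_n c Y n : asubst c Y n = rlift_n c (asubst 0 Y) n.
Proof.
  revert n; induction c; intros [|n]; try reflexivity.
  simpl; rewrite <- IHc; unfold asubst; nat_cases.
Qed.

Lemma fshift_frename A : forall c, fshift c A = frename (rlift_n c S) A.
Proof. induction A; intros c; simpl; f_equal; auto using ashift_rlift_n. Qed.

Lemma fsubst_frename A : forall c Y, fsubst c Y A = frename (rlift_n c (asubst 0 Y)) A.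
Proof. induction A; intros c Y; simpl; f_equal; auto using asubst_rlift_n. Qed.

Lemma tshift_trename t : forall c, tshift c t = trename (rlift_n c S) t.
Proof.
  induction t; intros c; simpl; f_equal; auto using ashift_rlift_n, fshift_frename.
Qed.

Lemma tsubst_trename t : forall c Y, tsubst c Y t = trename (rlift_n c (asubst 0 Y)) t.
Proof.
  induction t; intros c Y; simpl; f_equal; auto using asubst_rlift_n, fsubst_frename.
Qed.

Lemma fsize_frename A : forall r, fsize (frename r A) = fsize A.
Proof. induction A; intros; simpl; auto. Qed.

Lemma fsize_finst A Y : fsize (finst A Y) = fsize A.
Proof. unfold finst; rewrite fsubst_frename; apply fsize_frename. Qed.

Lemma rename_asubst0 r Y n : r (asubst 0 Y n) = asubst 0 (r Y) (rlift r n).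
Proof. destruct n; unfold asubst; simpl; rewrite ?Nat.add_0_r; reflexivity. Qed.

Lemma frename_fshift0 A r : frename (rlift r) (fshift 0 A) = fshift 0 (frename r A).
Proof.
  rewrite !fshift_frename, !frename_comp; apply frename_ext; reflexivity.
Qed.

Lemma trename_tshift0 t r : trename (rlift r) (tshift 0 t) = tshift 0 (trename r t).
Proof.
  rewrite !tshift_trename, !trename_comp; apply trename_ext; reflexivity.
Qed.

Lemma frename_finst A r Y :
  frename r (finst A Y) = finst (frename (rlift r) A) (r Y).
Proof.
  unfold finst; rewrite !fsubst_frename, !frename_comp.
  apply frename_ext, rename_asubst0.
Qed.

Lemma trename_tsubst0 t r Y :
  trename r (tsubst 0 Y t) = tsubst 0 (r Y) (trename (rlift r) t).
Proof.
  rewrite !tsubst_trename, !trename_comp; apply trename_ext, rename_asubst0.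
Qed.

Lemma trename_vshift t : forall r c, trename r (vshift c t) = vshift c (trename r t).
Proof. induction t; intros; simpl; f_equal; auto. Qed.

Lemma trename_vsubst t : forall r k s,
  trename r (vsubst k s t) = vsubst k (trename r s) (trename r t).
Proof.
  induction t; intros r k s; simpl; f_equal; auto.
  - destruct (Nat.eqb n k); auto. destruct (Nat.ltb n k); auto.
  - rewrite IHt, trename_vshift; reflexivity.
  - rewrite IHt, trename_tshift0; reflexivity.
Qed.

Lemma step_trename t u : step t u -> forall r, step (trename r t) (trename r u).
Proof.
  induction 1; intros r; simpl; try (constructor; auto; fail).
  - rewrite trename_vsubst; constructor.
  - rewrite trename_tsubst0; constructor.
Qed.

Lemma steps_trename t u : steps t u -> forall r, steps (trename r t) (trename r u).
Proof.
  induction 1; intros r; econstructor; eauto using step_trename.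
Qed.

Lemma normal_trename t : forall r, normal t -> normal (trename r t).
Proof.
  induction t; intros r H; simpl in *; auto.
  - destruct t1; simpl in *; try contradiction; destruct H; split; auto;
      apply (IHt1 r); simpl; auto.
  - destruct t; simpl in *; try contradiction; apply (IHt r); simpl; auto.
Qed.

Lemma typed_trename G t A : typed G t A -> forall r,
  typed (map (frename r) G) (trename r t) (frename r A).
Proof.
  induction 1; intros r; simpl.
  - constructor. rewrite nth_error_map, H; reflexivity.
  - constructor.
  - constructor; apply IHtyped.
  - econstructor; [apply IHtyped1|apply IHtyped2].
  - constructor. specialize (IHtyped (rlift r)).
    rewrite map_map in *. erewrite map_ext; [exact IHtyped|].
    intros; symmetry; apply frename_fshift0.
  - rewrite frename_finst. constructor. apply IHtyped.
Qed.

(** * Atom bounds *)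

Fixpoint fbound (N : nat) (A : form) : Prop :=
  match A with
  | Atom n => n < N
  | Imp A B => fbound N A /\ fbound N B
  | All A => fbound (S N) A
  end.

Fixpoint tbound (N : nat) (t : term) : Prop :=
  match t with
  | Var _ => True
  | Const A => fbound N A
  | Lam t => tbound N t
  | App t s => tbound N t /\ tbound N s
  | TLam t => tbound (S N) t
  | TApp t Y => tbound N t /\ Y < N
  end.

Lemma frename_agree A : forall N r q, (forall n, n < N -> r n = q n) -> fbound N A ->
  frename r A = frename q A.
Proof.
  induction A; intros N r q H HB; simpl in *; f_equal; intuition eauto.
  apply (IHA (S N)); auto. intros [|n] Hn; simpl; auto. f_equal; apply H; lia.
Qed.

Lemma trename_agree t : forall N r q, (forall n, n < N -> r n = q n) -> tbound N t ->
  trename r t = trename q t.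
Proof.
  induction t; intros N r q H HB; simpl in *; f_equal;
    intuition eauto using frename_agree.
  apply (IHt (S N)); auto. intros [|n] Hn; simpl; auto. f_equal; apply H; lia.
Qed.

Lemma fbound_frename A : forall N M r, (forall n, n < N -> r n < M) -> fbound N A ->
  fbound M (frename r A).
Proof.
  induction A; intros N M r H HB; simpl in *; intuition eauto.
  apply (IHA (S N)); auto. intros [|n] Hn; simpl; [lia|]. specialize (H n); lia.
Qed.

Lemma tbound_trename t : forall N M r, (forall n, n < N -> r n < M) -> tbound N t ->
  tbound M (trename r t).
Proof.
  induction t; intros N M r H HB; simpl in *; intuition eauto using fbound_frename.
  apply (IHt (S N)); auto. intros [|n] Hn; simpl; [lia|]. specialize (H n); lia.
Qed.

Lemma fbound_le A : forall N M, N <= M -> fbound N A -> fbound M A.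
Proof.
  induction A; intros N M HNM H; simpl in *; intuition eauto; try lia.
  apply (IHA (S N)); auto; lia.
Qed.

Lemma tbound_le t : forall N M, N <= M -> tbound N t -> tbound M t.
Proof.
  induction t; intros N M HNM H; simpl in *; intuition eauto using fbound_le; try lia.
  apply (IHt (S N)); auto; lia.
Qed.

Lemma fbound_exists A : exists N, fbound N A.
Proof.
  induction A as [n|A1 [N1 H1] A2 [N2 H2]|A [N H]].
  - exists (S n); simpl; lia.
  - exists (max N1 N2); simpl; split;
      [apply (fbound_le _ N1)|apply (fbound_le _ N2)]; auto; lia.
  - exists N; simpl; apply (fbound_le _ N); auto.
Qed.

Lemma tbound_exists t : exists N, tbound N t.
Proof.
  induction t as [i|A|t [N H]|t1 [N1 H1] t2 [N2 H2]|t [N H]|t [N H] Y].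
  - exists 0; simpl; auto.
  - destruct (fbound_exists A) as [N H]; exists N; exact H.
  - exists N; auto.
  - exists (max N1 N2); simpl; split;
      [apply (tbound_le _ N1)|apply (tbound_le _ N2)]; auto; lia.
  - exists N; simpl; apply (tbound_le _ N); auto.
  - exists (max N (S Y)); simpl; split; [apply (tbound_le _ N)|]; auto; lia.
Qed.

Lemma tbound_vshift t : forall N c, tbound N t -> tbound N (vshift c t).
Proof. induction t; intros; simpl in *; intuition auto. Qed.

Lemma tbound_vsubst t : forall N k s, tbound N s -> tbound N t -> tbound N (vsubst k s t).
Proof.
  induction t; intros N k s Hs Ht; simpl in *; intuition auto using tbound_vshift.
  - destruct (Nat.eqb n k); auto. destruct (Nat.ltb n k); simpl; auto.
  - apply IHt; auto. rewrite tshift_trename.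
    apply (tbound_trename _ N); auto. simpl; lia.
Qed.

Lemma step_tbound t u : step t u -> forall N, tbound N t -> tbound N u.
Proof.
  induction 1; intros N HB; simpl in *; intuition auto using tbound_vsubst.
  rewrite tsubst_trename. eapply tbound_trename; eauto.
  intros [|n] Hn; unfold asubst; simpl; lia.
Qed.

Lemma steps_tbound t u : steps t u -> forall N, tbound N t -> tbound N u.
Proof. induction 1; eauto using step_tbound. Qed.

Fixpoint neutral (t : term) : Prop :=
  match t with
  | Var _ | Const _ => True
  | App t _ => neutral t
  | TApp t _ => neutral t
  | _ => False
  end.

Definition abstraction (t : term) : Prop :=
  match t with Lam _ | TLam _ => True | _ => False end.

Lemma normal_typed_neutral t : forall G B,
  normal t -> typed G t B -> ~ abstraction t -> neutral t.
Proof.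
  induction t; intros G B Hn Ht Hab; simpl in *; auto.
  - inversion Ht; subst.
    destruct t1; try contradiction; simpl in Hn;
      try (eapply IHt1; [tauto|eassumption|simpl; tauto]).
    match goal with H : typed _ (TLam _) (Imp _ _) |- _ => inversion H end.
  - inversion Ht; subst.
    destruct t; try contradiction; simpl in Hn;
      try (eapply IHt; [eassumption|eassumption|simpl; tauto]).
    match goal with H : typed _ (Lam _) (All _) |- _ => inversion H end.
Qed.

(* In the empty context the head of a neutral term is a constant, and the type
   of the whole term is built from atoms occurring in the term. *)
Lemma neutral_fbound t : forall B N,
  neutral t -> typed [] t B -> tbound N t -> fbound N B.
Proof.
  induction t; intros B N Hn Ht HB; simpl in *; try contradiction;
    inversion Ht; subst.
  - match goal with H : nth_error [] _ = _ |- _ => destruct n; discriminate H end.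
  - assumption.
  - eapply (IHt1 (Imp _ B)); eauto; tauto.
  - destruct HB as [HB HY].
    match goal with H : typed [] t (All ?A) |- _ =>
      specialize (IHt (All A) N Hn H HB) end.
    unfold finst; rewrite fsubst_frename. eapply fbound_frename; eauto.
    intros [|m] Hm; unfold asubst; simpl; lia.
Qed.

(** * Instantiating a bound atom by a fresh one *)

(* [unfresh N] undoes the instantiation of a bound atom by an atom [N] that is
   fresh for the formula or term. *)
Definition unfresh (N n : nat) : nat := if Nat.eqb n N then 0 else S n.

Lemma unfresh_asubst0 N n : n < S N -> unfresh N (asubst 0 N n) = n.
Proof.
  destruct n as [|m]; intros H; unfold unfresh, asubst; simpl.
  - rewrite Nat.add_0_r, Nat.eqb_refl; reflexivity.
  - destruct (Nat.eqb_spec m N); [lia|reflexivity].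
Qed.

Lemma frename_unfresh_finst A N : fbound (S N) A -> frename (unfresh N) (finst A N) = A.
Proof.
  intros HA. unfold finst; rewrite fsubst_frename, frename_comp.
  rewrite <- (frename_id A) at 2. eapply frename_agree; eauto. apply unfresh_asubst0.
Qed.

Lemma trename_unfresh_tsubst0 t N :
  tbound (S N) t -> trename (unfresh N) (tsubst 0 N t) = t.
Proof.
  intros Ht. rewrite tsubst_trename, trename_comp.
  rewrite <- (trename_id t) at 2. eapply trename_agree; eauto. apply unfresh_asubst0.
Qed.

Lemma finst_fresh_inj A A' N : fbound (S N) A -> fbound (S N) A' ->
  finst A N = finst A' N -> A = A'.
Proof.
  intros H H' E.
  rewrite <- (frename_unfresh_finst A N H), <- (frename_unfresh_finst A' N H'), E.
  reflexivity.
Qed.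

(* If [t] does not mention the atom [N], then the type of a normal [t N] can
   only be an instance of the type of [t] at [N]: [t] is neutral, so its type
   does not mention [N] either. *)
Lemma typed_tapp_fresh_inv t A N : tbound N t -> fbound (S N) A ->
  normal (TApp t N) -> typed [] (TApp t N) (finst A N) -> typed [] t (All A).
Proof.
  intros Ht HA Hn Hty. inversion Hty as [| | | | | ? ? A0 ? Ht0]; subst.
  assert (Hnt : normal t /\ ~ abstraction t).
  { destruct t; simpl in Hn |- *; try contradiction; try tauto. inversion Ht0. }
  pose proof (normal_typed_neutral _ _ _ (proj1 Hnt) Ht0 (proj2 Hnt)) as Hneu.
  pose proof (neutral_fbound _ _ _ Hneu Ht0 Ht) as HA0.
  match goal with E : finst A0 N = finst A N |- _ =>
    rewrite <- (finst_fresh_inj A0 A N HA0 HA E); exact Ht0 end.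
Qed.

Lemma tsubst_fresh_normal_form_inv M s A N : tbound (S N) M -> fbound (S N) A ->
  steps (tsubst 0 N M) s -> normal s -> typed [] s (finst A N) ->
  let s' := trename (unfresh N) s in steps M s' /\ normal s' /\ typed [] s' A.
Proof.
  intros HM HA Hs Hns Hts s'; repeat split.
  - rewrite <- (trename_unfresh_tsubst0 M N HM). apply steps_trename, Hs.
  - apply normal_trename, Hns.
  - rewrite <- (frename_unfresh_finst A N HA). apply (typed_trename _ _ _ Hts).
Qed.

(** * Substituting a constant for a variable *)

Lemma vsubst_const_vshift Q : forall j k E, j <= k ->
  vsubst (S k) (Const E) (vshift j Q) = vshift j (vsubst k (Const E) Q).
Proof.
  induction Q; intros j k E Hjk; simpl; f_equal; auto; try (apply IHQ; lia).
  nat_cases.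
Qed.

Lemma vsubst_const_vsubst P : forall j k Q E, j <= k ->
  vsubst k (Const E) (vsubst j Q P) =
  vsubst j (vsubst k (Const E) Q) (vsubst (S k) (Const E) P).
Proof.
  induction P; intros j k Q E Hjk; simpl.
  - nat_cases.
  - reflexivity.
  - f_equal. rewrite IHP by lia. f_equal. apply vsubst_const_vshift; lia.
  - f_equal; auto.
  - f_equal. rewrite IHP by lia. f_equal.
    rewrite !tshift_trename, trename_vsubst. simpl. rewrite fshift_frename. reflexivity.
  - f_equal; auto.
Qed.

Lemma tsubst0_vsubst_const P k Y E :
  tsubst 0 Y (vsubst k (Const (fshift 0 E)) P) = vsubst k (Const E) (tsubst 0 Y P).
Proof.
  rewrite !tsubst_trename, trename_vsubst. simpl. rewrite fshift_frename, frename_comp.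
  rewrite <- (frename_id E) at 2. reflexivity.
Qed.

(* A reduct of [M[x:=c]] is the image of a reduct of [M]: the constant [c]
   cannot take part in a redex. *)
Lemma step_vsubst_const_inv M : forall k E u, step (vsubst k (Const E) M) u ->
  exists M', step M M' /\ u = vsubst k (Const E) M'.
Proof.
  induction M; intros k E u H; simpl in H.
  - revert H; nat_cases; intros Hs; inversion Hs.
  - inversion H.
  - inversion H; subst. destruct (IHM _ _ _ H1) as [M' [HM ->]].
    exists (Lam M'); split; [constructor; auto|reflexivity].
  - inversion H; subst.
    + destruct M1; simpl in *; try discriminate; [revert H1; nat_cases|].
      injection H1 as ->. exists (vsubst 0 M2 M1); split; [constructor|].
      symmetry; apply vsubst_const_vsubst; lia.
    + destruct (IHM1 _ _ _ H3) as [M' [HM ->]].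
      exists (App M' M2); split; [constructor; auto|reflexivity].
    + destruct (IHM2 _ _ _ H3) as [M' [HM ->]].
      exists (App M1 M'); split; [constructor; auto|reflexivity].
  - inversion H; subst. destruct (IHM _ _ _ H1) as [M' [HM ->]].
    exists (TLam M'); split; [constructor; auto|reflexivity].
  - inversion H; subst.
    + destruct M; simpl in *; try discriminate; [revert H1; nat_cases|].
      injection H1 as ->. exists (tsubst 0 n M); split; [constructor|].
      apply tsubst0_vsubst_const.
    + destruct (IHM _ _ _ H3) as [M' [HM ->]].
      exists (TApp M' n); split; [constructor; auto|reflexivity].
Qed.

Lemma steps_vsubst_const_inv k E M s : steps (vsubst k (Const E) M) s ->
  exists M', steps M M' /\ s = vsubst k (Const E) M'.
Proof.
  remember (vsubst k (Const E) M) as s0 eqn:Hs0. intros H; revert M Hs0.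
  induction H; intros M ->.
  - exists M; split; [constructor|reflexivity].
  - destruct (step_vsubst_const_inv _ _ _ _ H) as [M1 [H1 ->]].
    destruct (IHsteps M1 eq_refl) as [M2 [H2 ->]].
    exists M2; split; [econstructor; eauto|reflexivity].
Qed.

Lemma normal_vsubst_const_inv M : forall k E, normal (vsubst k (Const E) M) -> normal M.
Proof.
  induction M; intros k E H; simpl in *; eauto.
  - destruct M1; simpl in H |- *; try contradiction;
      [split; [exact I|]; apply (IHM2 k E);
       revert H; destruct (n =? k); [|destruct (n <? k)]; simpl; tauto|..].
    all: destruct H as [H1 H2]; split; [apply (IHM1 k E)|apply (IHM2 k E)]; assumption.
  - destruct M; simpl in H |- *; try contradiction; try exact I; apply (IHM k E); exact H.
Qed.

Lemma typed_vsubst_const_inv M : forall G1 G2 E B,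
  typed (G1 ++ G2) (vsubst (length G1) (Const E) M) B -> typed (G1 ++ E :: G2) M B.
Proof.
  induction M; intros G1 G2 E B H; simpl in H.
  - destruct (Nat.eqb_spec n (length G1)); [|destruct (Nat.ltb_spec n (length G1))];
      inversion H; subst; constructor.
    + rewrite nth_error_app2, Nat.sub_diag by lia; reflexivity.
    + rewrite nth_error_app1 in * by lia; auto.
    + rewrite nth_error_app2 in * by lia.
      replace (n - length G1) with (S (pred n - length G1)) by lia; auto.
  - inversion H; subst; constructor.
  - inversion H; subst. constructor. apply (IHM (_ :: G1)); eassumption.
  - inversion H; subst. econstructor; eauto.
  - inversion H; subst. constructor. rewrite map_app in *. simpl.
    apply IHM. rewrite length_map; eassumption.
  - inversion H; subst. constructor; eauto.
Qed.

Fixpoint head_const (t : term) : Prop :=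
  match t with
  | Const _ => True
  | App t _ => head_const t
  | TApp t _ => head_const t
  | _ => False
  end.

Lemma steps_head_const t u : steps t u -> head_const t -> head_const u.
Proof.
  intros H; induction H as [|t u v Htu _ IH]; auto.
  intros Ht; apply IH; clear IH; induction Htu; simpl in *; auto; contradiction.
Qed.

Lemma head_const_apps Ts : forall h, head_const h -> head_const (apps h Ts).
Proof. induction Ts as [|[s|Y] Ts IH]; intros h H; simpl; auto; apply IH; auto. Qed.

Lemma steps_trans t u v : steps t u -> steps u v -> steps t v.
Proof. induction 1; eauto using steps_step. Qed.

Lemma steps_appl t t' s : steps t t' -> steps (App t s) (App t' s).
Proof. induction 1; econstructor; eauto using st_appl. Qed.

Lemma steps_appr t s s' : steps s s' -> steps (App t s) (App t s').
Proof. induction 1; econstructor; eauto using st_appr. Qed.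

Lemma steps_tapp t t' Y : steps t t' -> steps (TApp t Y) (TApp t' Y).
Proof. induction 1; econstructor; eauto using st_tapp. Qed.

Lemma steps_lam t t' : steps t t' -> steps (Lam t) (Lam t').
Proof. induction 1; econstructor; eauto using st_lam. Qed.

Lemma steps_tlam t t' : steps t t' -> steps (TLam t) (TLam t').
Proof. induction 1; econstructor; eauto using st_tlam. Qed.

Lemma steps_app_const_inv t E v : steps (App t (Const E)) v ->
  (exists t', steps t t' /\ v = App t' (Const E)) \/
  (exists M, steps t (Lam M) /\ steps (vsubst 0 (Const E) M) v).
Proof.
  remember (App t (Const E)) as x eqn:Hx. intros H; revert t Hx.
  induction H as [x|x x' v Hs Hv IH]; intros t ->.
  - left; exists t; split; [constructor|reflexivity].
  - inversion Hs; subst.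
    + right; eexists; split; [apply steps_refl|eassumption].
    + destruct (IH _ eq_refl) as [[t'' [Ht'' ->]]|[M [HM HMv]]].
      * left; exists t''; split; [eapply steps_step|]; eauto.
      * right; exists M; split; [eapply steps_step|]; eauto.
    + match goal with H : step (Const _) _ |- _ => inversion H end.
Qed.

Lemma steps_tapp_inv t Y v : steps (TApp t Y) v ->
  (exists t', steps t t' /\ v = TApp t' Y) \/
  (exists M, steps t (TLam M) /\ steps (tsubst 0 Y M) v).
Proof.
  remember (TApp t Y) as x eqn:Hx. intros H; revert t Hx.
  induction H as [x|x x' v Hs Hv IH]; intros t ->.
  - left; exists t; split; [constructor|reflexivity].
  - inversion Hs; subst.
    + right; eexists; split; [apply steps_refl|eassumption].
    + destruct (IH _ eq_refl) as [[t'' [Ht'' ->]]|[M [HM HMv]]].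
      * left; exists t''; split; [eapply steps_step|]; eauto.
      * right; exists M; split; [eapply steps_step|]; eauto.
Qed.

Lemma star_n_fuel n : forall m A t, fsize A <= n -> fsize A <= m ->
  (star_n n A t <-> star_n m A t).
Proof.
  induction n as [|n IH]; intros [|m] A t Hn Hm;
    destruct A as [X|A B|A]; simpl in *; try lia; try tauto.
  - split; intros [Hc Hf]; split; auto; intros s Hs.
    + apply (IH m); try lia. apply Hf, (IH m); auto; lia.
    + apply (IH m); try lia. apply Hf, (IH m); auto; lia.
  - split; intros [Hc Hf]; split; auto; intros Y;
      apply (IH m); rewrite ?fsize_finst; auto; lia.
Qed.

Lemma star_n_star n A t : fsize A <= n -> (star_n n A t <-> star A t).
Proof. intros H; apply star_n_fuel; auto. Qed.

Lemma star_Imp A B t : star (Imp A B) t <->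
  closed t /\ (forall s, star A s -> star B (App t s)).
Proof.
  unfold star at 1; simpl.
  split; intros [Hc Hf]; split; auto; intros s Hs.
  - apply (star_n_star (fsize A + fsize B)); [lia|].
    apply Hf, star_n_star; auto; lia.
  - apply star_n_star; [lia|].
    apply Hf, (star_n_star (fsize A + fsize B)); auto; lia.
Qed.

Lemma star_All A t : star (All A) t <->
  closed t /\ (forall Y, star (finst A Y) (TApp t Y)).
Proof.
  unfold star at 1; simpl.
  split; intros [Hc Hf]; split; auto; intros Y.
  - apply (star_n_star (fsize A)); [rewrite fsize_finst; lia|]. apply Hf.
  - apply star_n_star; [rewrite fsize_finst; lia|]. apply Hf.
Qed.

Lemma sem_Const A : sem A (Const A).
Proof. split; [exact I|]. exists (Const A); repeat split; constructor. Qed.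

Lemma sem_app_head_const h s A B : head_const h ->
  sem (Imp A B) h -> sem A s -> sem B (App h s).
Proof.
  intros Hh [Hch [u [Hu [Hnu Htu]]]] [Hcs [s' [Hs' [Hns' Hts']]]].
  split; [split; auto|]. exists (App u s'); repeat split.
  - eapply steps_trans; [apply steps_appl|apply steps_appr]; eauto.
  - apply (steps_head_const _ _ Hu) in Hh. destruct u; simpl in *; tauto.
  - econstructor; eauto.
Qed.

Lemma sem_tapp_head_const h A Y : head_const h ->
  sem (All A) h -> sem (finst A Y) (TApp h Y).
Proof.
  intros Hh [Hch [u [Hu [Hnu Htu]]]].
  split; [exact Hch|]. exists (TApp u Y); repeat split.
  - apply steps_tapp; auto.
  - apply (steps_head_const _ _ Hu) in Hh. destruct u; simpl in *; tauto.
  - constructor; auto.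
Qed.

(** * Reflection and reification *)

Definition reflects (A : form) : Prop :=
  forall h, head_const h -> sem A h -> star A h.

Definition reifies (A : form) : Prop := forall t, star A t -> sem A t.

Lemma reflects_Imp A B : reifies A -> reflects B -> reflects (Imp A B).
Proof.
  intros HA HB h Hh Hsem. apply star_Imp; split; [apply Hsem|].
  intros s Hs. apply HB; [exact Hh|]. apply (sem_app_head_const _ _ A); auto.
Qed.

Lemma reflects_All A : (forall Y, reflects (finst A Y)) -> reflects (All A).
Proof.
  intros HA h Hh Hsem. apply star_All; split; [apply Hsem|].
  intros Y. apply HA; [exact Hh|]. apply sem_tapp_head_const; auto.
Qed.

(* The constant [c^A] plays the role of a fresh variable of type [A]. *)
Lemma reifies_Imp A B : reflects A -> reifies B -> reifies (Imp A B).
Proof.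
  intros HA HB t Ht. apply star_Imp in Ht as [Hc Hf].
  assert (HcA : star A (Const A)) by (apply HA; [exact I|apply sem_Const]).
  destruct (HB _ (Hf _ HcA)) as [_ [s [Hs [Hns Hts]]]].
  split; [exact Hc|].
  destruct (steps_app_const_inv _ _ _ Hs) as [[t' [Ht' ->]]|[M [HtM HMs]]].
  - exists t'; repeat split; auto.
    + destruct t'; simpl in *; tauto.
    + inversion Hts as [| |?|? ? ? A' ? Ht'' Hc'| |]; subst.
      inversion Hc'; subst; exact Ht''.
  - destruct (steps_vsubst_const_inv _ _ _ _ HMs) as [M' [HM ->]].
    exists (Lam M'); repeat split.
    + eapply steps_trans; [exact HtM|apply steps_lam, HM].
    + apply (normal_vsubst_const_inv M' 0 A), Hns.
    + constructor. apply (typed_vsubst_const_inv M' [] []), Hts.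
Qed.

Lemma reifies_All A : (forall Y, reifies (finst A Y)) -> reifies (All A).
Proof.
  intros HA t Ht. apply star_All in Ht as [Hc Hf].
  destruct (tbound_exists t) as [N1 HN1], (fbound_exists (All A)) as [N2 HN2].
  set (N := max N1 N2).
  assert (HtN : tbound N t) by (apply (tbound_le _ N1); auto; lia).
  assert (HAN : fbound (S N) A) by (apply (fbound_le (All A) N2); auto; lia).
  destruct (HA N _ (Hf N)) as [_ [s [Hs [Hns Hts]]]].
  split; [exact Hc|].
  destruct (steps_tapp_inv _ _ _ Hs) as [[t' [Ht' ->]]|[M [HtM HMs]]].
  - exists t'; repeat split; auto.
    + destruct t'; simpl in *; tauto.
    + apply (typed_tapp_fresh_inv _ _ N); auto. eapply steps_tbound; eauto.
  - assert (HM : tbound (S N) M) by apply (steps_tbound _ _ HtM N HtN).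
    destruct (tsubst_fresh_normal_form_inv _ _ _ _ HM HAN HMs Hns Hts)
      as [HMs' [Hns' Hts']].
    eexists; repeat split.
    + eapply steps_trans; [exact HtM|apply steps_tlam, HMs'].
    + exact Hns'.
    + constructor; exact Hts'.
Qed.

Lemma reflects_reifies A : reflects A /\ reifies A.
Proof.
  remember (fsize A) as n eqn:Hn; revert A Hn.
  induction n as [n IH] using lt_wf_ind; intros [X|A B|A] Hn; simpl in Hn.
  - split; intros t; auto.
  - destruct (IH (fsize A) ltac:(lia) A eq_refl), (IH (fsize B) ltac:(lia) B eq_refl).
    split; [apply reflects_Imp|apply reifies_Imp]; auto.
  - split; [apply reflects_All|apply reifies_All]; intros Y;
      apply (IH (fsize A)); rewrite ?fsize_finst; auto; lia.
Qed.

Theorem mainTheorem7 :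
  forall A : form,
    (forall (D : form) (Ts : list (term + nat)),
        Forall arg_ok Ts ->
        sem A (apps (Const D) Ts) -> star A (apps (Const D) Ts))
    /\ (forall t : term, star A t -> sem A t).
Proof.
  intros A. destruct (reflects_reifies A) as [Hrefl Hreif]. split; [|exact Hreif].
  intros D Ts _. apply Hrefl, head_const_apps. exact I.
Qed.
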